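(* Consider a finite Markov decision process with state set $\mathcal S$, action set $\mathcal A$, transition function $P$, reward function $R$, initial state distribution $d_0$ and discount factor $\gamma\in[0,1)$, together with a finite set of options $\mathcal O$ in which every option $o$ has an intra-option policy $\pi_o(s,a)$, a termination function $\beta_o(s,\vartheta)\in[0,1]$ differentiable in a parameter vector $\vartheta$, and a policy over options $\pi_{\mathcal O}(s,o)$. Let $X'=(O_0,S_1,O_1,S_2,O_2,S_3,\dots)$ be the random state-option transition path (state-option pairs shifted by one time step) generated by the option dynamics described in the context, and for $\mathcal T\in\mathbb N$ let $G^{\mathcal T}_\vartheta$ be the $\mathcal T$-step finite horizon Fisher information matrix with respect to $\vartheta$ of the distribution of this path truncated at time step $\mathcal T$, written in the form $$\big(G^{\mathcal T}_\vartheta\big)_{i,j}=-\mathbb E\Big[\frac{\partial^2\ln\Pr(X'_{0:\mathcal T};\vartheta)}{\partial\vartheta_i\partial\vartheta_j}\Big].$$ Let $\mu_{\mathcal O}(s',o)$ be the stationary distribution of state-option pairs $(s',o)$ (state $s'$ entered while option $o$ is active). Then $$\Big(\lim_{\mathcal T\to\infty}\frac1{\mathcal T}G^{\mathcal T}_\vartheta\Big)_{i,j}=-\sum_{s',o}\mu_{\mathcal O}(s',o)\,\frac{\partial\ln\beta_o(s',\vartheta)}{\partial\vartheta_i}\,\frac{\partial\ln\big(1-\beta_o(s',\vartheta)+\beta_o(s',\vartheta)\pi_{\mathcal O}(s',o)\big)}{\partial\vartheta_j}.$$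
   Context: Option dynamics (option-critic framework, all options available in every state): at time $t$ the agent is in state $S_t$ with active option $O_t$; it draws $A_t\sim\pi_{O_t}(S_t,\cdot)$, receives reward $R_t$ with $\mathbb E[R_t\mid S_t=s,A_t=a]=R(s,a)$, and moves to $S_{t+1}\sim P(S_t,A_t,\cdot)$. The next option is drawn with probability $\Pr(O_{t+1}=o'\mid O_t=o,S_{t+1}=s')=(1-\beta_o(s',\vartheta))\mathbf 1_{o'=o}+\beta_o(s',\vartheta)\pi_{\mathcal O}(s',o')$. The discounted problem is treated as an undiscounted one that terminates with probability $1-\gamma$ at each step. The process is assumed ergodic and irreducible so that the stationary distribution $\mu_{\mathcal O}$ is well defined, and all logarithms appearing are assumed finite (in particular $0<\beta_o(s',\vartheta)$ and $\beta_o(s',\vartheta)(1-\pi_{\mathcal O}(s',o))\neq 0$ where needed). *)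

From HB Require Import structures.
From mathcomp Require Import all_boot all_order all_algebra.
From mathcomp Require Import all_classical all_reals all_analysis.
Set Implicit Arguments. Unset Strict Implicit. Unset Printing Implicit Defensive.
Import Order.TTheory GRing.Theory Num.Theory.
Import numFieldNormedType.Exports.
Local Open Scope ring_scope.

Section OptionDynamics.
Variables (R : realType) (S A O : finType) (n : nat).

Definition evec (i : 'I_n) : 'rV[R]_n := delta_mx 0 i.

Definition is_distr (T : finType) (p : T -> R) :=
  (forall x, 0 <= p x) /\ \sum_(x : T) p x = 1.

(* state transition while option o' is active in state s':
   Pr(S_{t+1} = s'' | S_t = s', O_t = o') = sum_a pi_{o'}(s',a) P(s',a,s'') *)
Definition state_step (pi : O -> S -> A -> R) (P : S -> A -> S -> R)
  (s' : S) (o' : O) (s'' : S) : R :=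
  \sum_(a : A) pi o' s' a * P s' a s''.

(* option transition:
   Pr(O_{t+1}=o' | O_t=o, S_{t+1}=s') = (1-beta_o(s'))1_{o'=o} + beta_o(s') piO(s',o') *)
Definition option_step (beta : O -> S -> 'rV[R]_n -> R) (piO : S -> O -> R)
  (th : 'rV[R]_n) (o : O) (s' : S) (o' : O) : R :=
  (1 - beta o s' th) * (o' == o)%:R + beta o s' th * piO s' o'.

(* Transition kernel of the shifted state-option chain X'_t = (O_t, S_{t+1}) *)
Definition pair_kernel pi P beta piO (th : 'rV[R]_n) (x y : O * S) : R :=
  option_step beta piO th x.1 x.2 y.1 * state_step pi P x.2 y.1 y.2.

(* Law of X'_0 = (O_0, S_1): S_0 ~ d0, O_0 ~ piO(S_0, .), then one step. *)
Definition pair_init pi P (piO : S -> O -> R) (d0 : S -> R) (x : O * S) : R :=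
  \sum_(s0 : S) d0 s0 * piO s0 x.1 * state_step pi P s0 x.1 x.2.

Fixpoint path_tail_prob pi P beta piO th (prev : O * S) (l : seq (O * S)) : R :=
  match l with
  | [::] => 1
  | y :: l' => pair_kernel pi P beta piO th prev y * path_tail_prob pi P beta piO th y l'
  end.

(* Probability of the truncated path X'_{0:T} = (X'_0, ..., X'_{T-1}) *)
Definition path_prob pi P beta piO d0 (th : 'rV[R]_n) (l : seq (O * S)) : R :=
  match l with
  | [::] => 1
  | y :: l' => pair_init pi P piO d0 y * path_tail_prob pi P beta piO th y l'
  end.

Definition fisherT pi P beta piO d0 (T : nat) (th : 'rV[R]_n) (i j : 'I_n) : R :=
  - \sum_(x : T.-tuple (O * S))
      path_prob pi P beta piO d0 th x *
      'D_(evec i) ('D_(evec j) (fun th' => ln (path_prob pi P beta piO d0 th' x))) th.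

Fixpoint kpow (T : finType) (K : T -> T -> R) (m : nat) (x y : T) : R :=
  match m with
  | 0 => (x == y)%:R
  | m'.+1 => \sum_(z : T) kpow K m' x z * K z y
  end.

Definition irreducible_chain (T : finType) (K : T -> T -> R) :=
  forall x y : T, exists m, 0 < kpow K m x y.

(* ergodic (finite chain): irreducible and aperiodic, i.e. some power of the
   kernel has all entries positive (primitive kernel) *)
Definition ergodic_chain (T : finType) (K : T -> T -> R) :=
  exists m, forall x y : T, 0 < kpow K m x y.

Definition stationary (T : finType) (K : T -> T -> R) (mu : T -> R) :=
  is_distr mu /\ forall y : T, \sum_(x : T) mu x * K x y = mu y.

End OptionDynamics.

From HB Require Import structures.
From mathcomp Require Import all_boot all_order all_algebra.
From mathcomp Require Import all_classical all_reals all_analysis.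
From mathcomp Require Import lra ring.
Import Order.TTheory GRing.Theory Num.Theory.
Import numFieldNormedType.Exports.
Local Open Scope classical_set_scope.
Local Open Scope ring_scope.

(* Only the option-termination factors of Pr(X'_{0:T}) depend on theta, so up to a
   theta-independent constant ln Pr(X'_{0:T}) is the sum over the T - 1 transitions of
   ln option_step, and the expected Hessian is the sum over m < T - 1 of E[J(X'_m)], where
   J(o, s) is the expected Hessian of ln option_step for one option transition out of
   (o, s).  Since option_step is affine in beta with slopes summing to zero, the
   second-order terms cancel in J, and the sum of the squared slopes collapses to
   J(o, s) = d_i ln beta * d_j ln (1 - beta + beta piO).  The law of X'_m converges to
   mu_O because a primitive kernel contracts the oscillation of its columns (Doeblin),
   and the Cesaro means of E[J(X'_m)] converge to the mu_O-average of J. *)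

Section LogDerivatives.
Context {R : realType} {V : normedModType R}.
Implicit Types (f : V -> R) (x u v : V).

Lemma is_derive_ln f x v : differentiable f x -> 0 < f x ->
  is_derive x v (fun t => ln (f t)) ('D_v f x / f x).
Proof.
move=> df fx0.
have [dln1 Dln1] := is_derive1_ln fx0.
have dln : differentiable (@ln R) (f x) by apply/derivable1_diffP.
have dc : differentiable (@ln R \o f) x := differentiable_comp df dln.
apply: DeriveDef; first exact: diff_derivable dc.
change ('D_v (@ln R \o f) x = 'D_v f x / f x).
rewrite (deriveE _ dc) diff_comp // (deriveE _ df) /= (deriv1E dln1) /=.
by rewrite derive1E Dln1.
Qed.

Lemma near_gt0 f x : differentiable f x -> 0 < f x -> \forall t \near x, 0 < f t.
Proof. by move=> /differentiable_continuous fc; exact: cvgr_gt. Qed.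

Lemma is_derive2_ln f x u v : (forall t, differentiable f t) -> 0 < f x ->
  derivable ('D_v f) x u ->
  is_derive x u ('D_v (fun t => ln (f t)))
    ('D_u ('D_v f) x / f x - 'D_v f x * 'D_u f x / f x ^+ 2).
Proof.
move=> df fx0 dDf.
have fxN0 : f x != 0 by rewrite gt_eqF.
have dinv : derivable (fun t => (f t)^-1) x u.
  exact: derivableV fxN0 (diff_derivable (df x)).
have Dln_near : \forall t \near x,
    ('D_v f * (fun t => (f t)^-1)) t = 'D_v (fun t => ln (f t)) t.
  near=> t; have ft0 : 0 < f t by near: t; exact: near_gt0.
  by have [_ ->] := is_derive_ln _ _ v (df t) ft0.
apply: near_eq_is_derive Dln_near _; apply: DeriveDef; first exact: derivableM.
have dfx : derivable f x u := diff_derivable (df x).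
rewrite deriveM // deriveV // /GRing.scale /=; field.
Unshelve. all: by end_near.
Qed.

Lemma is_derive_sum_seq (I : eqType) (r : seq I) (G : I -> V -> R) x v :
  {in r, forall k, derivable (G k) x v} ->
  is_derive x v (fun t => \sum_(k <- r) G k t) (\sum_(k <- r) 'D_v (G k) x).
Proof.
elim: r => [|k r IHr] dG.
  rewrite big_nil; under eq_fun do rewrite big_nil; exact: is_derive_cst.
rewrite big_cons; under eq_fun do rewrite big_cons.
have dGk : derivable (G k) x v by apply: dG; rewrite mem_head.
have /IHr dGr : {in r, forall k, derivable (G k) x v}.
  by move=> k' rk'; apply: dG; rewrite in_cons rk' orbT.
exact: is_deriveD (derivableP dGk) dGr.
Qed.

Lemma ln_prod (I : eqType) (r : seq I) (F : I -> R) c :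
  0 < c -> {in r, forall k, 0 < F k} ->
  ln (c * \prod_(k <- r) F k) = ln c + \sum_(k <- r) ln (F k).
Proof.
elim: r c => [|k r IHr] c c0 F0; first by rewrite !big_nil mulr1 addr0.
have Fk0 : 0 < F k by apply: F0; rewrite mem_head.
rewrite big_cons mulrA IHr ?mulr_gt0 // => [|k' rk']; last first.
  by apply: F0; rewrite in_cons rk' orbT.
by rewrite big_cons lnM ?posrE // addrA.
Qed.

Lemma near_in_gt0 (I : eqType) (r : seq I) (F : I -> V -> R) x :
  (forall k, differentiable (F k) x) -> {in r, forall k, 0 < F k x} ->
  \forall t \near x, {in r, forall k, 0 < F k t}.
Proof.
move=> dF; elim: r => [|k r IHr] F0; first by near=> t.
have Fk0 := near_gt0 _ _ (dF k) (F0 k (mem_head _ _)).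
have Fr0 : \forall t \near x, {in r, forall k, 0 < F k t}.
  by apply: IHr => k' rk'; apply: F0; rewrite in_cons rk' orbT.
near=> t => k'; rewrite in_cons => /orP[/eqP-> | rk'].
  by near: t; exact: Fk0.
by move: k' rk'; near: t; exact: Fr0.
Unshelve. all: by end_near.
Qed.

Lemma derive2_ln_prod (I : eqType) (r : seq I) (F : I -> V -> R) c x u v :
  0 < c -> (forall k t, differentiable (F k) t) ->
  (forall k, derivable ('D_v (F k)) x u) -> {in r, forall k, 0 < F k x} ->
  'D_u ('D_v (fun t => ln (c * \prod_(k <- r) F k t))) x =
  \sum_(k <- r) 'D_u ('D_v (fun t => ln (F k t))) x.
Proof.
move=> c0 dF dDF F0.
have F0_near := near_join (near_in_gt0 _ _ _ _ (dF^~ x) F0).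
have Dln_near : \forall t \near x,
    'D_v (fun t => ln (c * \prod_(k <- r) F k t)) t =
    \sum_(k <- r) 'D_v (fun t => ln (F k t)) t.
  near=> t.
  have Ft0_near : \forall t' \near t, {in r, forall k, 0 < F k t'}.
    by near: t; exact: F0_near.
  have Ft0 := nbhs_singleton Ft0_near.
  have ln_near : \forall t' \near t, ln (c * \prod_(k <- r) F k t') =
      (cst (ln c) + (fun t' => \sum_(k <- r) ln (F k t'))) t'.
    by near=> t'; rewrite /= ln_prod //; near: t'; exact: Ft0_near.
  have [dsum Dsum] : is_derive t v (fun t' => \sum_(k <- r) ln (F k t'))
      (\sum_(k <- r) 'D_v (fun t' => ln (F k t')) t).
    apply: is_derive_sum_seq => k rk.
    by have [] := is_derive_ln _ _ v (dF k t) (Ft0 k rk).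
  by rewrite (near_eq_derive _ ln_near) deriveD ?derive_cst ?add0r //;
    exact: derivable_cst.
rewrite (near_eq_derive _ Dln_near).
have [_ ->] // : is_derive x u (fun t => \sum_(k <- r) 'D_v (fun t => ln (F k t)) t)
    (\sum_(k <- r) 'D_u ('D_v (fun t => ln (F k t))) x).
  apply: is_derive_sum_seq => k rk.
  by have [] := is_derive2_ln _ _ _ _ (dF k) (F0 k rk) (dDF k).
Unshelve. all: by end_near.
Qed.

End LogDerivatives.

Section TupleSums.
Context {V : nmodType} {T : finType}.

Lemma sum_tuple0 (F : seq T -> V) : \sum_(t : 0.-tuple T) F t = F [::].
Proof. by rewrite (big_pred1 [tuple]) // => t; symmetry; apply/eqP; exact: tuple0. Qed.

Lemma sum_tupleS k (F : seq T -> V) :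
  \sum_(t : k.+1.-tuple T) F t = \sum_(x : T) \sum_(t : k.-tuple T) F (x :: t).
Proof.
rewrite pair_big /= (reindex (fun p : T * k.-tuple T => [tuple of p.1 :: p.2])) //.
exists (fun t : k.+1.-tuple T => (thead t, [tuple of behead t])).
  by move=> [x t] _ /=; rewrite theadE; congr pair; apply: val_inj.
by move=> t _; rewrite /= [in RHS](tuple_eta t).
Qed.

End TupleSums.

Section Oscillation.
Context {R : realType} {T : finType}.
Variable z0 : T.
Implicit Types (p f : T -> R).

Definition fmax f := f [arg max_(z > z0) f z]%O.
Definition fmin f := f [arg min_(z < z0) f z]%O.
Definition osc f := fmax f - fmin f.

Lemma fmax_ge f z : f z <= fmax f.
Proof. by rewrite /fmax; case: arg_maxP => // zM _; apply. Qed.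

Lemma fmin_le f z : fmin f <= f z.
Proof. by rewrite /fmin; case: arg_minP => // zm _; apply. Qed.

Lemma osc_ge0 f : 0 <= osc f.
Proof. by rewrite subr_ge0 (le_trans (fmin_le f z0) (fmax_ge f z0)). Qed.

Lemma mean_le_sub p f d hi z : 0 <= d -> (forall z, d <= p z) ->
  \sum_z p z = 1 -> (forall z, f z <= hi) ->
  \sum_z p z * f z <= hi - d * (hi - f z).
Proof.
move=> d0 dp p1 fhi.
have p0 z' : 0 <= p z' := le_trans d0 (dp z').
have gap_ge0 z' : 0 <= hi - f z' by rewrite subr_ge0.
suff : d * (hi - f z) <= \sum_z' p z' * (hi - f z').
  rewrite [X in _ <= X -> _](_ : _ = hi - \sum_z' p z' * f z'); first lra.
  by rewrite -[hi in RHS]mul1r -p1 mulr_suml -sumrB; apply: eq_bigr => z' _; rewrite mulrBr.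
rewrite (bigD1 z) //= -[X in X <= _]addr0 lerD ?ler_wpM2r ?sumr_ge0 // => z' _.
exact: mulr_ge0.
Qed.

Lemma osc_mix_le (Q : T -> T -> R) f d : 0 <= d -> (forall x z, d <= Q x z) ->
  (forall x, \sum_z Q x z = 1) ->
  osc (fun x => \sum_z Q x z * f z) <= (1 - d) * osc f.
Proof.
move=> d0 dQ Q1; set g := fun x => _.
have g_le x : g x <= fmax f - d * osc f.
  exact: (mean_le_sub _ _ _ _ [arg min_(z < z0) f z]%O d0 (dQ x) (Q1 x) (fmax_ge f)).
have g_ge x : fmin f + d * osc f <= g x.
  have negf_le z : - f z <= - fmin f by rewrite lerN2 fmin_le.
  have := mean_le_sub _ _ _ _ [arg max_(z > z0) f z]%O d0 (dQ x) (Q1 x) negf_le.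
  rewrite /g /osc /fmax; under eq_bigr do rewrite mulrN; rewrite sumrN; lra.
have oscE h : osc h = fmax h - fmin h by [].
have := g_le [arg max_(z > z0) g z]%O; have := g_ge [arg min_(z < z0) g z]%O.
have := mulr_ge0 d0 (osc_ge0 f); have := oscE f.
rewrite mulrBl mul1r [osc g]oscE /fmax /fmin; set e := d * osc f; lra.
Qed.

Lemma dist_mean_le_osc p f x : (forall z, 0 <= p z) -> \sum_z p z = 1 ->
  `|\sum_z p z * f z - f x| <= osc f.
Proof.
move=> p0 p1.
have := mean_le_sub _ _ _ _ x (lexx 0) p0 p1 (fmax_ge f).
have negf_le z : - f z <= - fmin f by rewrite lerN2 fmin_le.
have := mean_le_sub _ _ _ _ x (lexx 0) p0 p1 negf_le.
under eq_bigr do rewrite mulrN; rewrite sumrN !mul0r !subr0 => lo hi.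
have := fmin_le f x; have := fmax_ge f x.
rewrite ler_norml /osc; lra.
Qed.

End Oscillation.

Section KernelPowers.
Context {R : realType} {T : finType}.
Variable K : T -> T -> R.
Hypotheses (K_ge0 : forall x y, 0 <= K x y) (K_sum1 : forall x, \sum_y K x y = 1).

Lemma kpowD a b x y : kpow K (a + b) x y = \sum_z kpow K a x z * kpow K b z y.
Proof.
elim: b y => [|b IHb] y.
  rewrite addn0 /= (bigD1 y) //= eqxx mulr1 big1 ?addr0 // => z /negbTE ->.
  by rewrite mulr0.
rewrite addnS /=; under eq_bigr do rewrite IHb mulr_suml.
rewrite exchange_big /=; apply: eq_bigr => z _.
by rewrite mulr_sumr; apply: eq_bigr => z' _; rewrite mulrA.
Qed.

Lemma kpow1 x y : kpow K 1 x y = K x y.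
Proof.
rewrite /= (bigD1 x) //= eqxx mul1r big1 ?addr0 // => z.
by rewrite eq_sym => /negbTE ->; rewrite mul0r.
Qed.

Lemma kpow_ge0 m x y : 0 <= kpow K m x y.
Proof.
elim: m y => [|m IHm] y /=; first by rewrite ler0n.
by apply: sumr_ge0 => z _; apply: mulr_ge0.
Qed.

Lemma kpow_sum1 m x : \sum_y kpow K m x y = 1.
Proof.
elim: m => [|m IHm] /=.
  rewrite (bigD1 x) //= eqxx big1 ?addr0 // => z.
  by rewrite eq_sym => /negbTE ->.
rewrite exchange_big /= -[RHS]IHm; apply: eq_bigr => z _.
by rewrite -mulr_sumr K_sum1 mulr1.
Qed.

Lemma kpow_le1 m x y : kpow K m x y <= 1.
Proof.
rewrite -(kpow_sum1 m x) (bigD1 y) //= lerDl.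
by apply: sumr_ge0 => z _; apply: kpow_ge0.
Qed.

Definition chain_prob (y : T) (l : seq T) : R := \prod_(e <- zip (y :: l) l) K e.1 e.2.

Lemma chain_prob_cons y z l : chain_prob y (z :: l) = K y z * chain_prob z l.
Proof. by rewrite /chain_prob /= big_cons. Qed.

Lemma sum_chain_prob k y : \sum_(t : k.-tuple T) chain_prob y t = 1.
Proof.
elim: k y => [|k IHk] y; first by rewrite (sum_tuple0 (chain_prob y)) /chain_prob big_nil.
rewrite (sum_tupleS _ (chain_prob y)) -[RHS](K_sum1 y); apply: eq_bigr => z _.
by under eq_bigr do rewrite chain_prob_cons; rewrite -mulr_sumr IHk mulr1.
Qed.

Lemma sum_chain_prob_additive k y (L : T * T -> R) :
  \sum_(t : k.-tuple T) chain_prob y t * \sum_(e <- zip (y :: t) t) L e =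
  \sum_(m < k) \sum_w kpow K m y w * \sum_z K w z * L (w, z).
Proof.
elim: k y => [|k IHk] y.
  rewrite (sum_tuple0 (fun t => chain_prob y t * \sum_(e <- zip (y :: t) t) L e)).
  by rewrite big_ord0 big_nil mulr0.
set J := fun w => \sum_z K w z * L (w, z).
have kpow0_sum : \sum_w kpow K 0 y w * J w = J y.
  rewrite (bigD1 y) //= eqxx mul1r big1 ?addr0 // => w.
  by rewrite eq_sym => /negbTE ->; rewrite mul0r.
have kpowS_sum m :
    \sum_w kpow K m.+1 y w * J w = \sum_z K y z * \sum_w kpow K m z w * J w.
  under eq_bigr do rewrite -add1n kpowD mulr_suml.
  rewrite exchange_big; apply: eq_bigr => z _.
  by rewrite kpow1 mulr_sumr; apply: eq_bigr => w _; rewrite mulrA.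
rewrite (sum_tupleS _ (fun t => chain_prob y t * \sum_(e <- zip (y :: t) t) L e)).
rewrite big_ord_recl /= kpow0_sum.
under [X in _ = _ + X]eq_bigr do rewrite kpowS_sum.
rewrite [in RHS]exchange_big /= [J y]/J -big_split /=; apply: eq_bigr => z _.
rewrite -mulr_sumr -mulrDr -[L (y, z)]mulr1 -(sum_chain_prob k z) mulr_sumr -IHk.
rewrite -big_split mulr_sumr; apply: eq_bigr => t _ /=.
by rewrite chain_prob_cons big_cons; ring.
Qed.

Lemma osc_kpowD_le a m w d : 0 <= d -> (forall z z', d <= kpow K a z z') ->
  osc w (kpow K (a + m) ^~ w) <= (1 - d) * osc w (kpow K m ^~ w).
Proof.
move=> d_ge0 d_le.
have -> : kpow K (a + m) ^~ w = fun z => \sum_z' kpow K a z z' * kpow K m z' w.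
  by apply: funext => z; rewrite kpowD.
exact: osc_mix_le d_ge0 d_le (@kpow_sum1 a).
Qed.

Lemma osc_kpow_le1 m w : osc w (kpow K m ^~ w) <= 1.
Proof.
have := kpow_le1 m [arg max_(z > w) kpow K m z w]%O w.
have := kpow_ge0 m [arg min_(z < w) kpow K m z w]%O w.
rewrite /osc /fmax /fmin /=; lra.
Qed.

Variable mu : T -> R.
Hypothesis mu_stat : stationary K mu.

Lemma stationary_kpow m y : \sum_x mu x * kpow K m x y = mu y.
Proof.
have [_ muK] := mu_stat.
elim: m y => [|m IHm] y /=.
  rewrite (bigD1 y) //= eqxx mulr1 big1 ?addr0 // => x /negbTE ->.
  by rewrite mulr0.
under eq_bigr do rewrite mulr_sumr.
rewrite exchange_big /= -[RHS]muK; apply: eq_bigr => z _.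
by rewrite -IHm mulr_suml; apply: eq_bigr => x _; rewrite mulrA.
Qed.

Hypothesis K_prim : ergodic_chain K.

Lemma kpow_cvg x w : (fun m => kpow K m x w) @ \oo --> mu w.
Proof.
have [M [d [d_gt0 KM_ge]]] : exists M d, 0 < d /\ forall z z', d <= kpow K M z z'.
  have [M KM_gt0] := K_prim.
  pose zz := [arg min_(p < (w, w)) kpow K M p.1 p.2]%O.
  exists M, (kpow K M zz.1 zz.2); split; first exact: KM_gt0.
  by move=> z z'; rewrite /zz; case: arg_minP => // p _ p_min; exact: (p_min (z, z')).
have d_le1 : d <= 1 := le_trans (KM_ge w w) (kpow_le1 M w w).
have osc_geom q : osc w (kpow K (q * M) ^~ w) <= (1 - d) ^+ q.
  elim: q => [|q IHq]; first by rewrite expr0 osc_kpow_le1.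
  rewrite mulSn exprS; apply: le_trans (osc_kpowD_le _ _ _ _ (ltW d_gt0) KM_ge) _.
  by rewrite ler_wpM2l // subr_ge0.
have dist_le m : `|kpow K m x w - mu w| <= osc w (kpow K m ^~ w).
  rewrite -(stationary_kpow m w) distrC.
  by case: mu_stat => -[mu_ge0 mu_sum1] _; exact: dist_mean_le_osc.
have geom_cvg : (GRing.exp (1 - d) : R^nat) @ \oo --> 0.
  by apply: cvg_expr; rewrite ger0_norm ?subr_ge0 //; lra.
apply/(@cvgrPdist_lt _ R^o) => e e_gt0.
have [N _ geom_small] := (cvgrPdist_lt _ _).1 geom_cvg e e_gt0.
exists (N * M)%N => // m /= le_NM_m; rewrite distrC.
apply: le_lt_trans (dist_le m) _; rewrite -(subnK le_NM_m).
apply: le_lt_trans (osc_kpowD_le _ _ _ _ (lexx 0) (@kpow_ge0 _)) _.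
rewrite subr0 mul1r; apply: le_lt_trans (osc_geom N) _.
have := geom_small N (leqnn N); rewrite /= sub0r normrN ger0_norm //.
by apply: exprn_ge0; rewrite subr_ge0.
Qed.

Lemma distr_kpow_cvg (p : T -> R) w : \sum_y p y = 1 ->
  (fun m => \sum_y p y * kpow K m y w) @ \oo --> mu w.
Proof.
move=> p1; rewrite -[mu w]mul1r -p1 mulr_suml.
apply: cvg_big => [|y _]; first exact: add_continuous.
exact: cvgMl_tmp (kpow_cvg y w).
Qed.

End KernelPowers.

Section OptionChain.
Context {R : realType} {S A O : finType} {n : nat}.
Variables (P : S -> A -> S -> R) (d0 : S -> R) (pi : O -> S -> A -> R)
  (beta : O -> S -> 'rV[R]_n -> R) (piO : S -> O -> R).
Hypotheses (P_distr : forall s a, is_distr (P s a)) (d0_distr : is_distr d0)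
  (pi_distr : forall o s, is_distr (pi o s)) (piO_distr : forall s, is_distr (piO s))
  (beta_01 : forall o s th, 0 <= beta o s th <= 1)
  (beta_diff : forall o s th, differentiable (beta o s) th)
  (Dbeta_diff : forall o s v th, differentiable ('D_v (beta o s)) th).

Local Notation X := (O * S)%type.
Local Notation K th := (pair_kernel pi P beta piO th).

Lemma state_step_distr s o : is_distr (state_step pi P s o).
Proof.
split=> [s'|]; first by apply: sumr_ge0 => a _; apply: mulr_ge0;
  [case: (pi_distr o s) | case: (P_distr s a)].
rewrite /state_step exchange_big /=; case: (pi_distr o s) => _ <-.
by apply: eq_bigr => a _; rewrite -mulr_sumr; case: (P_distr s a) => _ ->; rewrite mulr1.
Qed.

Lemma option_step_distr th o s : is_distr (option_step beta piO th o s).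
Proof.
have /andP[b_ge0 b_le1] := beta_01 o s th; have [piO_ge0 piO_sum1] := piO_distr s.
split; first by move=> o'; apply: addr_ge0; apply: mulr_ge0; rewrite ?subr_ge0.
rewrite /option_step big_split /= -!mulr_sumr piO_sum1 (bigD1 o) //= eqxx.
rewrite big1 ?addr0 /=; first by ring.
by move=> o' /negbTE ->.
Qed.

Lemma pair_kernel_distr th x : is_distr (K th x).
Proof.
have [opt_ge0 opt_sum1] := option_step_distr th x.1 x.2.
split=> [y|]; first by apply: mulr_ge0; [exact: opt_ge0 | case: (state_step_distr x.2 y.1)].
rewrite -(pair_big xpredT xpredT (fun o s => K th x (o, s))) /= -[RHS]opt_sum1.
apply: eq_bigr => o _; rewrite /pair_kernel /= -mulr_sumr.
by case: (state_step_distr x.2 o) => _ ->; rewrite mulr1.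
Qed.

Lemma pair_init_distr : is_distr (pair_init pi P piO d0).
Proof.
have [d0_ge0 d0_sum1] := d0_distr.
split=> [x|].
  apply: sumr_ge0 => s _; apply: mulr_ge0; last by case: (state_step_distr s x.1).
  by apply: mulr_ge0; [|case: (piO_distr s)].
rewrite /pair_init exchange_big /= -d0_sum1; apply: eq_bigr => s0 _.
rewrite -(pair_big xpredT xpredT (fun o s => d0 s0 * piO s0 o * state_step pi P s0 o s)) /=.
have [_ piO_sum1] := piO_distr s0.
rewrite -[RHS]mulr1 -piO_sum1 mulr_sumr; apply: eq_bigr => o _.
by case: (state_step_distr s0 o) => _ ss_sum1; rewrite -mulr_sumr ss_sum1 mulr1.
Qed.

Lemma path_tail_probE th y l :
  path_tail_prob pi P beta piO th y l = chain_prob (K th) y l.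
Proof.
elim: l y => [|z l IHl] y /=; first by rewrite /chain_prob big_nil.
by rewrite chain_prob_cons IHl.
Qed.

Definition option_slope s o o' : R := piO s o' - (o' == o)%:R.

Lemma option_stepE th o s o' : option_step beta piO th o s o' =
  (o' == o)%:R + option_slope s o o' * beta o s th.
Proof. by rewrite /option_step /option_slope; ring. Qed.

Lemma option_step_affine o s o' : (fun th => option_step beta piO th o s o') =
  cst (o' == o)%:R + option_slope s o o' *: beta o s.
Proof. by apply: funext => th; rewrite option_stepE. Qed.

Lemma option_step_diff o s o' th :
  differentiable (fun th => option_step beta piO th o s o') th.
Proof. by rewrite option_step_affine; apply: differentiableD; [|apply: differentiableZ]. Qed.

Lemma is_derive_option_step o s o' th w :
  is_derive th w (fun th => option_step beta piO th o s o')
    (option_slope s o o' * 'D_w (beta o s) th).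
Proof.
have dbeta : derivable (beta o s) th w by apply: diff_derivable.
have dZbeta : derivable (option_slope s o o' *: beta o s) th w by apply: derivableZ.
rewrite option_step_affine; apply: DeriveDef; first exact: derivableD.
by rewrite deriveD // derive_cst add0r deriveZ.
Qed.

Lemma is_derive2_option_step o s o' th u v :
  is_derive th u ('D_v (fun th => option_step beta piO th o s o'))
    (option_slope s o o' * 'D_u ('D_v (beta o s)) th).
Proof.
have -> : 'D_v (fun th => option_step beta piO th o s o') =
    option_slope s o o' *: 'D_v (beta o s).
  by apply: funext => th'; have [_ ->] := is_derive_option_step o s o' th' v.
apply: is_deriveZ; apply: derivableP; exact: diff_derivable.
Qed.

Variables (theta u v : 'rV[R]_n).

Definition step_hessian (y z : X) : R :=
  'D_u ('D_v (fun th => ln (option_step beta piO th y.1 y.2 z.1))) theta.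

Definition mean_step_hessian (y : X) : R := \sum_z K theta y z * step_hessian y z.

Lemma path_prob_hessian y l :
  path_prob pi P beta piO d0 theta (y :: l) *
    'D_u ('D_v (fun th => ln (path_prob pi P beta piO d0 th (y :: l)))) theta =
  path_prob pi P beta piO d0 theta (y :: l) *
    \sum_(e <- zip (y :: l) l) step_hessian e.1 e.2.
Proof.
set r := zip (y :: l) l.
set c := pair_init pi P piO d0 y * \prod_(e <- r) state_step pi P e.1.2 e.2.1 e.2.2.
pose F (e : X * X) th := option_step beta piO th e.1.1 e.1.2 e.2.1.
have path_probE th : path_prob pi P beta piO d0 th (y :: l) = c * \prod_(e <- r) F e th.
  by rewrite /= path_tail_probE /chain_prob /pair_kernel big_split /c /F /=; ring.
have [->|pp_neq0] := eqVneq (path_prob pi P beta piO d0 theta (y :: l)) 0.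
  by rewrite !mul0r.
move: pp_neq0; rewrite path_probE mulf_eq0 negb_or => /andP[c_neq0 F_neq0].
have c_gt0 : 0 < c.
  rewrite lt0r c_neq0 mulr_ge0 //; first by case: pair_init_distr.
  by apply: prodr_ge0 => e _; case: (state_step_distr e.1.2 e.2.1).
have F_gt0 : {in r, forall e, 0 < F e theta}.
  move=> e re; rewrite lt0r; case: (option_step_distr theta e.1.1 e.1.2) => -> _.
  by move: F_neq0; rewrite prodf_seq_neq0 andbT => /allP/(_ e re).
have -> : (fun th => ln (path_prob pi P beta piO d0 th (y :: l))) =
    (fun th => ln (c * \prod_(e <- r) F e th)).
  by apply: funext => th; rewrite path_probE.
rewrite (derive2_ln_prod _ _ _ _ _ u v c_gt0 _ _ F_gt0) // => e.
  exact: option_step_diff.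
by have [] := is_derive2_option_step e.1.1 e.1.2 e.2.1 theta u v.
Qed.

Lemma expected_path_hessian k :
  \sum_(x : k.+1.-tuple X) path_prob pi P beta piO d0 theta x *
    'D_u ('D_v (fun th => ln (path_prob pi P beta piO d0 th x))) theta =
  \sum_(m < k) \sum_w
    (\sum_y pair_init pi P piO d0 y * kpow (K theta) m y w) * mean_step_hessian w.
Proof.
have K_sum1 x : \sum_z K theta x z = 1 by case: (pair_kernel_distr theta x).
rewrite (sum_tupleS _ (fun x => path_prob pi P beta piO d0 theta x *
  'D_u ('D_v (fun th => ln (path_prob pi P beta piO d0 th x))) theta)) /=.
under eq_bigr do under eq_bigr do rewrite path_prob_hessian /= path_tail_probE -mulrA.
under eq_bigr do rewrite -mulr_sumr (sum_chain_prob_additive _ K_sum1) mulr_sumr.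
rewrite exchange_big; apply: eq_bigr => m _.
under eq_bigr do rewrite mulr_sumr.
rewrite exchange_big; apply: eq_bigr => w _.
by rewrite mulr_suml; apply: eq_bigr => y _; rewrite mulrA.
Qed.

Lemma option_step_stay th o s :
  option_step beta piO th o s o = 1 - beta o s th + beta o s th * piO s o.
Proof. by rewrite /option_step eqxx /=; ring. Qed.

Lemma sum_option_slope s o : \sum_o' option_slope s o o' = 0.
Proof.
have [_ piO_sum1] := piO_distr s.
rewrite sumrB piO_sum1 (bigD1 o) //= eqxx big1 ?addr0 ?subrr // => o'.
by move/negbTE ->.
Qed.

Lemma mean_step_hessian_option o s : mean_step_hessian (o, s) =
  \sum_o' option_step beta piO theta o s o' * step_hessian (o, s) (o', s).
Proof.
rewrite /mean_step_hessian -(pair_big xpredT xpredT (fun o' s' =>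
  K theta (o, s) (o', s') * step_hessian (o, s) (o', s'))) /=.
apply: eq_bigr => o' _.
have [_ ss_sum1] := state_step_distr s o'.
rewrite -[RHS]mulr1 -ss_sum1 mulr_sumr; apply: eq_bigr => s' _.
have -> : step_hessian (o, s) (o', s') = step_hessian (o, s) (o', s) by [].
by rewrite /pair_kernel /=; ring.
Qed.

Hypotheses (beta_gt0 : forall o s, 0 < beta o s theta)
  (stay_gt0 : forall o s, 0 < 1 - beta o s theta + beta o s theta * piO s o).

Lemma option_step_eq0 o s o' :
  option_step beta piO theta o s o' = 0 -> option_slope s o o' = 0.
Proof.
have [-> | neq_o'o] := eqVneq o' o.
  by rewrite option_step_stay => stay_eq0; move: (stay_gt0 o s); rewrite stay_eq0 ltxx.
rewrite /option_step /option_slope (negbTE neq_o'o) mulr0 add0r subr0 => /eqP.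
by rewrite mulf_eq0 gt_eqF ?beta_gt0 //= => /eqP.
Qed.

Lemma option_step_mul_hessian o s o' :
  option_step beta piO theta o s o' * step_hessian (o, s) (o', s) =
  option_slope s o o' * 'D_u ('D_v (beta o s)) theta -
  option_slope s o o' ^+ 2 * 'D_v (beta o s) theta * 'D_u (beta o s) theta /
    option_step beta piO theta o s o'.
Proof.
(* Where the transition probability vanishes so does the slope, so the junk value
   x / 0 = 0 makes both sides vanish. *)
have [q_eq0 | q_neq0] := eqVneq (option_step beta piO theta o s o') 0.
  by rewrite q_eq0 option_step_eq0 // expr0n /= !mul0r subr0.
have q_gt0 : 0 < option_step beta piO theta o s o'.
  by rewrite lt0r q_neq0; case: (option_step_distr theta o s) => ->.
have [dDq DDq] := is_derive2_option_step o s o' theta u v.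
rewrite /step_hessian /=.
have [_ ->] := is_derive2_ln _ _ u v (option_step_diff o s o') q_gt0 dDq.
rewrite DDq.
have [_ ->] := is_derive_option_step o s o' theta u.
have [_ ->] := is_derive_option_step o s o' theta v.
by field.
Qed.

Lemma sum_option_slope_sq o s :
  \sum_o' option_slope s o o' ^+ 2 / option_step beta piO theta o s o' =
  (1 - piO s o) / (beta o s theta * option_step beta piO theta o s o).
Proof.
have [piO_ge0 piO_sum1] := piO_distr s.
have b_gt0 := beta_gt0 o s; have f_gt0 := stay_gt0 o s.
have others : \sum_(o' | o' != o)
    option_slope s o o' ^+ 2 / option_step beta piO theta o s o' =
    (1 - piO s o) / beta o s theta.
  have rest_sum : \sum_(o' | o' != o) piO s o' = 1 - piO s o.
    by rewrite -piO_sum1 [in RHS](bigD1 o) //= addrC addrK.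
  rewrite -rest_sum mulr_suml; apply: eq_bigr => o' neq_o'o.
  rewrite /option_slope /option_step (negbTE neq_o'o) mulr0 add0r subr0.
  have [-> | p_neq0] := eqVneq (piO s o') 0; first by rewrite expr0n /= !mul0r.
  by field; rewrite p_neq0 gt_eqF.
rewrite (bigD1 o) //= others /option_slope eqxx option_step_stay /=.
by field; rewrite !gt_eqF.
Qed.

Lemma mean_step_hessianE o s : mean_step_hessian (o, s) =
  'D_u (fun th => ln (beta o s th)) theta *
  'D_v (fun th => ln (1 - beta o s th + beta o s th * piO s o)) theta.
Proof.
rewrite mean_step_hessian_option.
under eq_bigr do rewrite option_step_mul_hessian.
rewrite big_split /= sumrN -mulr_suml sum_option_slope mul0r add0r.
have -> : \sum_o' option_slope s o o' ^+ 2 * 'D_v (beta o s) theta *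
      'D_u (beta o s) theta / option_step beta piO theta o s o' =
    'D_v (beta o s) theta * 'D_u (beta o s) theta *
      \sum_o' option_slope s o o' ^+ 2 / option_step beta piO theta o s o'.
  by rewrite mulr_sumr; apply: eq_bigr => o' _; ring.
rewrite sum_option_slope_sq.
have -> : (fun th => ln (1 - beta o s th + beta o s th * piO s o)) =
    (fun th => ln (option_step beta piO th o s o)).
  by apply: funext => th; rewrite option_step_stay.
have f_gt0 : 0 < option_step beta piO theta o s o by rewrite option_step_stay.
have [_ ->] := is_derive_ln _ _ u (beta_diff o s theta) (beta_gt0 o s).
have [_ ->] := is_derive_ln _ _ v (option_step_diff o s o theta) f_gt0.
have [_ ->] := is_derive_option_step o s o theta v.
rewrite /option_slope eqxx /=.
by field; rewrite !gt_eqF ?beta_gt0.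
Qed.

End OptionChain.

Lemma cvg_mean_lag (R : realType) (f c : R^nat) (l : R) :
  (forall k, f k.+1 = \sum_(m < k) c m) -> c @ \oo --> l ->
  (fun k => f k / k%:R) @ \oo --> l.
Proof.
move=> fE c_cvg; rewrite -cvg_shiftS.
pose u m := if m is m'.+1 then c m' else 0.
have u_cvg : u @ \oo --> l by rewrite -cvg_shiftS.
suff -> : [sequence f n.+1 / n.+1%:R]_n = arithmetic_mean u by exact: cesaro.
apply: funext => k; rewrite /arithmetic_mean /series /= big_nat_recl //= add0r.
by rewrite fE big_mkord mulrC.
Qed.

Theorem theorem2 (R : realType) (S A O : finType) (n : nat)
  (P : S -> A -> S -> R) (Rew : S -> A -> R) (d0 : S -> R) (gamma : R)
  (pi : O -> S -> A -> R) (beta : O -> S -> 'rV[R]_n -> R) (piO : S -> O -> R)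
  (mu : S -> O -> R) (theta : 'rV[R]_n) (i j : 'I_n) :
  (forall s a, is_distr (P s a)) ->
  is_distr d0 ->
  0 <= gamma < 1 ->
  (forall o s, is_distr (pi o s)) ->
  (forall s, is_distr (piO s)) ->
  (forall o s th, 0 <= beta o s th <= 1) ->
  (forall o s th, differentiable (beta o s) th) ->
  (forall o s v th, differentiable ('D_v (beta o s)) th) ->
  (forall o s, 0 < beta o s theta) ->
  (forall o s, 0 < 1 - beta o s theta + beta o s theta * piO s o) ->
  irreducible_chain (pair_kernel pi P beta piO theta) ->
  ergodic_chain (pair_kernel pi P beta piO theta) ->
  stationary (pair_kernel pi P beta piO theta) (fun x : O * S => mu x.2 x.1) ->
  (fun T : nat => fisherT pi P beta piO d0 T theta i j / T%:R) @ \oo -->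
    - \sum_(s : S) \sum_(o : O)
        mu s o * 'D_(evec R i) (fun th => ln (beta o s th)) theta
               * 'D_(evec R j) (fun th => ln (1 - beta o s th + beta o s th * piO s o)) theta.
Proof.
move=> P_distr d0_distr _ pi_distr piO_distr beta_01 beta_diff Dbeta_diff
  beta_gt0 stay_gt0 _ K_prim mu_stat.
pose K := pair_kernel pi P beta piO theta.
pose J := mean_step_hessian P pi beta piO theta (evec R i) (evec R j).
pose nu m w := \sum_y pair_init pi P piO d0 y * kpow K m y w.
have [K_ge0 K_sum1] : (forall x y, 0 <= K x y) /\ forall x, \sum_y K x y = 1.
  by split=> x; case: (pair_kernel_distr _ _ _ _ P_distr pi_distr piO_distr beta_01 theta x).
have fisherT_succ k : fisherT pi P beta piO d0 k.+1 theta i j =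
    \sum_(m < k) - \sum_w nu m w * J w.
  by rewrite /fisherT (expected_path_hessian _ _ _ _ _ P_distr d0_distr pi_distr
    piO_distr beta_01 beta_diff Dbeta_diff) sumrN.
have nu_cvg w : nu^~ w @ \oo --> mu w.2 w.1.
  apply: (distr_kpow_cvg _ K_ge0 K_sum1 _ mu_stat K_prim).
  by case: (pair_init_distr _ _ _ _ P_distr d0_distr pi_distr piO_distr).
have -> : - \sum_s \sum_o mu s o * 'D_(evec R i) (fun th => ln (beta o s th)) theta *
    'D_(evec R j) (fun th => ln (1 - beta o s th + beta o s th * piO s o)) theta =
    - \sum_w mu w.2 w.1 * J w.
  rewrite -(pair_big xpredT xpredT (fun o s => mu s o * J (o, s))) exchange_big /=.
  congr (- _); apply: eq_bigr => s _; apply: eq_bigr => o _.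
  by rewrite /J (mean_step_hessianE _ _ _ _ P_distr pi_distr piO_distr beta_01
    beta_diff Dbeta_diff _ _ _ beta_gt0 stay_gt0) mulrA.
apply: cvg_mean_lag fisherT_succ _; apply: cvgN.
apply: cvg_big => [|w _]; first exact: add_continuous.
exact: cvgMr_tmp (nu_cvg w).
Qed.
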